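(* Let $(q_l)_{l\ge1}$ be positive numbers with $q_1=1$ and $0<R:=\lim_{l\to\infty}q_l/q_{l+1}<\infty$, and let $\gamma_l>0$ for all $l$. For every $\rho^*>0$ there exists an equilibrium state $z^*$ with $\rho(z^* )=\rho^*$ if and only if condition (EQ) holds: $\tilde f(1)>1$, or $\tilde f(1)=1$ and $\tilde g(1)<\infty$. Moreover, if (EQ) holds, then (a) there is a unique $\mu^*\in(0,1]$ with $\tilde f(\mu^* )=1$; (b) the equilibrium state $z^*$ with $\rho(z^* )=\rho^*$ lies in $X_+$ (all entries strictly positive) and is given by $$z^*_l=N^*\,\tilde q_l\,(\mu^* )^l\ (l\in\mathbb{N}),\qquad N^*=N(z^* )=\rho^*/\tilde g(\mu^* );$$ (c) $\tilde A(z^* )=\rho^*\ln\mu^*\le0$.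
   Context: $X=\{z=(z_l)_{l\ge1}:\sum_l l|z_l|<\infty\}$, $X_{0+}$ its nonnegative elements. For $z\in X$: $\rho(z)=\sum_l l z_l$, $N(z)=\sum_l z_l$, $J_l(z)=\gamma_l\big(z_1z_l-N(z)\frac{q_l}{q_{l+1}}z_{l+1}\big)$ for $l\ge1$ and $J_0(z)=-\sum_{l\ge1}J_l(z)$. An equilibrium state is some $z\in X_{0+}$ with $J_l(z)=0$ for all $l\ge0$. Set $\tilde q_l=q_lR^l$, $\tilde f(\mu)=\sum_{l\ge1}\tilde q_l\mu^l$, $\tilde g(\mu)=\sum_{l\ge1}l\,\tilde q_l\mu^l$ (both have radius of convergence $1$), $\tilde f(1)=\sum_l\tilde q_l\in(0,\infty]$, $\tilde g(1)=\sum_l l\tilde q_l\in(0,\infty]$. For $z\in X_{0+}\setminus\{0\}$, $\tilde A(z)=\sum_l z_l\ln\big(z_l/(\tilde q_lN(z))\big)$ with $0\ln0=0$, and $\tilde A(0)=0$. *)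

From Stdlib Require Import Reals.
From Coquelicot Require Import Coquelicot.
Open Scope R_scope.

(* Sequences (z_l)_{l>=1} are modelled as z : nat -> R; the value z 0 is
   never used.  Every series over l >= 1 is written as a series over n >= 0
   with term at index l = S n. *)

Definition inX (z : nat -> R) : Prop :=
  ex_series (fun n => INR (S n) * Rabs (z (S n))).

Definition inX0p (z : nat -> R) : Prop :=
  inX z /\ forall l, (1 <= l)%nat -> 0 <= z l.

Definition rhoz (z : nat -> R) : R := Series (fun n => INR (S n) * z (S n)).
Definition Nz (z : nat -> R) : R := Series (fun n => z (S n)).

Definition Jl (q gamma : nat -> R) (z : nat -> R) (l : nat) : R :=
  gamma l * (z 1%nat * z l - Nz z * (q l / q (S l)) * z (S l)).

Definition J0 (q gamma : nat -> R) (z : nat -> R) : R :=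
  - Series (fun n => Jl q gamma z (S n)).

Definition equilibrium (q gamma : nat -> R) (z : nat -> R) : Prop :=
  inX0p z /\ J0 q gamma z = 0 /\ forall l, (1 <= l)%nat -> Jl q gamma z l = 0.

Definition qt (q : nat -> R) (Rq : R) (l : nat) : R := q l * Rq ^ l.

(* tilde f(mu) = sum_{l>=1} tilde q_l mu^l, as an extended real (value +oo
   when the (nonnegative-term) series diverges). *)
Definition ftilde (q : nat -> R) (Rq : R) (mu : R) : Rbar :=
  Lim_seq (sum_n (fun n => qt q Rq (S n) * mu ^ (S n))).

Definition gtilde (q : nat -> R) (Rq : R) (mu : R) : Rbar :=
  Lim_seq (sum_n (fun n => INR (S n) * qt q Rq (S n) * mu ^ (S n))).

Definition EQcond (q : nat -> R) (Rq : R) : Prop :=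
  Rbar_lt 1 (ftilde q Rq 1)
  \/ (ftilde q Rq 1 = Finite 1 /\ Rbar_lt (gtilde q Rq 1) p_infty).

(* tilde A(z) = sum_l z_l ln(z_l / (tilde q_l N(z))), with 0 ln 0 = 0
   (for z = 0 every term vanishes, so tilde A(0) = 0). *)
Definition Aterm (q : nat -> R) (Rq : R) (z : nat -> R) (l : nat) : R :=
  if Req_EM_T (z l) 0 then 0 else z l * ln (z l / (qt q Rq l * Nz z)).

Definition Atilde (q : nat -> R) (Rq : R) (z : nat -> R) : R :=
  Series (fun n => Aterm q Rq z (S n)).

(* An equilibrium satisfies the balance [z_1 z_l = N (q_l / q_(l+1)) z_(l+1)],
   which forces [z_l = N qt_l mu^l] with [mu = z_1 / (N R)]; summing gives
   [N = N ftilde(mu)] and [rho = N gtilde(mu)], so [ftilde(mu) = 1] and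
   [gtilde(mu) < oo].  Since [qt_(l+1) / qt_l -> 1] the series [ftilde] has
   radius 1, hence [mu <= 1], and [ftilde] is strictly increasing, hence [mu]
   is unique.  Conversely, under (EQ) a root [mu_s \in (0, 1]] exists ([mu_s = 1],
   or by the intermediate value theorem on [0, 1) when [ftilde(1) > 1]), and
   [N qt_l mu_s^l] with [N = rho / gtilde(mu_s)] is an equilibrium.  Finally
   [ln (z_l / (qt_l N)) = l ln mu_s], so [Atilde(z) = rho ln mu_s]. *)

From Stdlib Require Import Reals Lra Lia Ranalysis5 Classical.
From Coquelicot Require Import Coquelicot.
Open Scope R_scope.

Lemma bernoulli_ineq (e : R) (k : nat) : e <= 1 -> 1 - INR k * e <= (1 - e) ^ k.
Proof.
  intros he. induction k as [|k IH].
  - simpl. lra.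
  - rewrite S_INR. simpl.
    assert (hk : 0 <= INR k) by apply pos_INR.
    assert (h : (1 - e) * (1 - INR k * e) <= (1 - e) * (1 - e) ^ k)
      by (apply Rmult_le_compat_l; lra).
    nra.
Qed.

Lemma exists_sum_n_gt (a : nat -> R) (c : R) :
  Rbar_lt c (Lim_seq (sum_n a)) -> exists n, c < sum_n a n.
Proof.
  intros H. apply not_all_not_ex. intros Hle.
  assert (K : Rbar_le (Lim_seq (sum_n a)) (Lim_seq (fun _ => c))).
  { apply Lim_seq_le_loc, filter_forall. intros n. apply Rnot_lt_le, Hle. }
  rewrite Lim_seq_const in K. exact (Rbar_le_not_lt _ _ K H).
Qed.

Lemma sum_n_Sn_R (a : nat -> R) n : sum_n a (S n) = sum_n a n + a (S n).
Proof. exact (sum_Sn a n). Qed.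

Section NonnegSeries.

Variable a : nat -> R.
Hypothesis a_nonneg : forall n, 0 <= a n.

Lemma sum_n_nonneg n : 0 <= sum_n a n.
Proof.
  induction n as [|n IH]; [rewrite sum_O; apply a_nonneg|].
  rewrite sum_n_Sn_R. specialize (a_nonneg (S n)). lra.
Qed.

Lemma sum_n_le_succ n : sum_n a n <= sum_n a (S n).
Proof. rewrite sum_n_Sn_R. specialize (a_nonneg (S n)). lra. Qed.

Lemma sum_n_le_is_series l : is_series a l -> forall n, sum_n a n <= l.
Proof. intros H. apply is_lim_seq_incr_compare; [exact H | exact sum_n_le_succ]. Qed.

Lemma is_series_term_le l : is_series a l -> forall n, a n <= l.
Proof.
  intros H n. apply Rle_trans with (sum_n a n); [|exact (sum_n_le_is_series l H n)].
  destruct n as [|n]; [rewrite sum_O; lra|].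
  rewrite sum_n_Sn_R. assert (h := sum_n_nonneg n). lra.
Qed.

Lemma is_lim_seq_sum_n_nonneg : is_lim_seq (sum_n a) (Lim_seq (sum_n a)).
Proof. apply Lim_seq_correct, ex_lim_seq_incr, sum_n_le_succ. Qed.

Lemma is_series_Lim_seq_sum_n l : Lim_seq (sum_n a) = Finite l -> is_series a l.
Proof. intros H. assert (K := is_lim_seq_sum_n_nonneg). rewrite H in K. exact K. Qed.

Lemma is_series_of_Lim_seq_lt_p_infty :
  Rbar_lt (Lim_seq (sum_n a)) p_infty -> exists l, is_series a l.
Proof.
  intros H.
  assert (K : Rbar_le (Lim_seq (fun _ => 0)) (Lim_seq (sum_n a)))
    by (apply Lim_seq_le_loc, filter_forall, sum_n_nonneg).
  rewrite Lim_seq_const in K.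
  destruct (Lim_seq (sum_n a)) as [l| |] eqn:E; try contradiction.
  exists l. exact (is_series_Lim_seq_sum_n l E).
Qed.

End NonnegSeries.

Section RatioPowerSeries.

Variables (q : nat -> R) (Rq : R).
Hypothesis hq_pos : forall l, (1 <= l)%nat -> 0 < q l.
Hypothesis hR : is_lim_seq (fun l => q (S l) / q (S (S l))) Rq.
Hypothesis hR_pos : 0 < Rq.

Local Notation fterm mu := (fun n => qt q Rq (S n) * mu ^ S n).
Local Notation gterm mu := (fun n => INR (S n) * qt q Rq (S n) * mu ^ S n).

Lemma qt_pos l : (1 <= l)%nat -> 0 < qt q Rq l.
Proof. intros hl. apply Rmult_lt_0_compat; [auto | apply pow_lt; lra]. Qed.

Lemma fterm_nonneg mu : 0 <= mu -> forall n, 0 <= qt q Rq (S n) * mu ^ S n.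
Proof.
  intros hmu n. apply Rmult_le_pos; [|apply pow_le; lra].
  left. apply qt_pos. lia.
Qed.

Lemma gterm_nonneg mu : 0 <= mu -> forall n, 0 <= INR (S n) * qt q Rq (S n) * mu ^ S n.
Proof.
  intros hmu n. rewrite Rmult_assoc. apply Rmult_le_pos; [apply pos_INR|].
  exact (fterm_nonneg mu hmu n).
Qed.

Lemma qt_ratio_lim : is_lim_seq (fun n => Rabs (qt q Rq (S (S n)) / qt q Rq (S n))) 1.
Proof.
  assert (H := is_lim_seq_inv _ _ hR).
  assert (H2 : Finite Rq <> Finite 0) by (intro E; injection E; lra).
  specialize (H H2). simpl in H.
  apply (is_lim_seq_scal_l _ Rq) in H. simpl in H.
  replace (Rq * / Rq) with 1 in H by (field; lra).
  eapply is_lim_seq_ext; [|exact H].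
  intros n. simpl.
  assert (h1 := qt_pos (S n) ltac:(lia)). assert (h2 := qt_pos (S (S n)) ltac:(lia)).
  rewrite Rabs_pos_eq by (apply Rlt_le, Rdiv_lt_0_compat; lra).
  assert (h3 := hq_pos (S n) ltac:(lia)). assert (h4 := hq_pos (S (S n)) ltac:(lia)).
  unfold qt. simpl. field. repeat split; try lra. apply pow_nonzero. lra.
Qed.

Lemma CV_radius_qt : CV_radius (qt q Rq) = 1.
Proof.
  rewrite <- CV_radius_decr_1.
  rewrite (CV_radius_finite_DAlembert _ 1); [apply f_equal, Rinv_1| |lra|exact qt_ratio_lim].
  intros n. apply Rgt_not_eq, qt_pos. lia.
Qed.

Lemma ex_series_fterm mu : Rabs mu < 1 -> ex_series (fterm mu).
Proof.
  intros hmu.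
  assert (H : ex_pseries (PS_decr_1 (qt q Rq)) mu)
    by (apply CV_radius_inside; rewrite CV_radius_decr_1, CV_radius_qt; exact hmu).
  apply (ex_series_scal_l mu) in H.
  eapply ex_series_ext; [|exact H]. intros n. simpl.
  rewrite pow_n_pow. unfold PS_decr_1, scal; simpl. unfold mult; simpl. ring.
Qed.

Lemma ex_series_gterm mu : Rabs mu < 1 -> ex_series (gterm mu).
Proof.
  intros hmu.
  assert (H : ex_pseries (PS_derive (qt q Rq)) mu)
    by (apply CV_radius_inside; rewrite CV_radius_derive, CV_radius_qt; exact hmu).
  apply (ex_series_scal_l mu) in H.
  eapply ex_series_ext; [|exact H]. intros n. unfold PS_derive.
  rewrite pow_n_pow. unfold scal; simpl. unfold mult; simpl. ring.
Qed.

Lemma not_ex_series_fterm mu : 1 < mu -> ~ ex_series (fterm mu).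
Proof.
  intros hmu Hex. apply ex_series_lim_0 in Hex. revert Hex.
  apply (not_ex_series_DAlembert _ mu); [lra| |].
  - intros n. apply Rgt_not_eq, Rmult_lt_0_compat; [apply qt_pos; lia | apply pow_lt; lra].
  - assert (H := is_lim_seq_scal_l _ mu _ qt_ratio_lim).
    simpl in H. rewrite Rmult_1_r in H.
    eapply is_lim_seq_ext; [|exact H]. intros n.
    assert (h1 := qt_pos (S n) ltac:(lia)). assert (h2 := qt_pos (S (S n)) ltac:(lia)).
    assert (hp : forall k, 0 < mu ^ k) by (intros k; apply pow_lt; lra).
    cbv beta.
    rewrite (Rabs_pos_eq (_ / qt q Rq (S n))) by (apply Rlt_le, Rdiv_lt_0_compat; auto).
    rewrite Rabs_pos_eq
      by (apply Rlt_le, Rdiv_lt_0_compat; apply Rmult_lt_0_compat; auto).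
    simpl. field. specialize (hp n). repeat split; lra.
Qed.

Lemma sum_n_fterm_le mu nu : 0 <= mu <= nu -> forall n,
  sum_n (fterm mu) n + qt q Rq 1 * (nu - mu) <= sum_n (fterm nu) n.
Proof.
  intros hmn n. induction n as [|n IH].
  - rewrite !sum_O. simpl. lra.
  - rewrite !sum_n_Sn_R. cbv beta.
    assert (hp : mu ^ S (S n) <= nu ^ S (S n)) by (apply pow_incr; lra).
    assert (h : 0 < qt q Rq (S (S n))) by (apply qt_pos; lia).
    assert (qt q Rq (S (S n)) * mu ^ S (S n) <= qt q Rq (S (S n)) * nu ^ S (S n))
      by (apply Rmult_le_compat_l; lra).
    lra.
Qed.

(* The linear lower bound comes from the [l = 1] term alone. *)
Lemma ftilde_ge_is_series mu nu s : 0 <= mu <= nu -> is_series (fterm mu) s ->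
  Rbar_le (s + qt q Rq 1 * (nu - mu)) (ftilde q Rq nu).
Proof.
  intros hmn Hs.
  assert (H : is_lim_seq (fun n => sum_n (fterm mu) n + qt q Rq 1 * (nu - mu))
                (s + qt q Rq 1 * (nu - mu)))
    by (apply is_lim_seq_plus'; [exact Hs | apply is_lim_seq_const]).
  rewrite <- (is_lim_seq_unique _ _ H).
  apply Lim_seq_le_loc, filter_forall. exact (sum_n_fterm_le mu nu hmn).
Qed.

Lemma ftilde_eq_1_inj mu nu : 0 <= mu -> 0 <= nu ->
  ftilde q Rq mu = Finite 1 -> ftilde q Rq nu = Finite 1 -> mu = nu.
Proof.
  assert (hq1 : 0 < qt q Rq 1) by (apply qt_pos; lia).
  assert (Hlt : forall x y, 0 <= x < y -> ftilde q Rq x = Finite 1 ->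
                  ftilde q Rq y = Finite 1 -> False).
  { intros x y hxy Hx Hy.
    assert (K := ftilde_ge_is_series x y 1 ltac:(lra)
                   (is_series_Lim_seq_sum_n _ (fterm_nonneg x ltac:(lra)) 1 Hx)).
    rewrite Hy in K. simpl in K. nra. }
  intros hmu hnu Hmu Hnu.
  destruct (Rtotal_order mu nu) as [h|[h|h]]; auto; exfalso.
  - exact (Hlt mu nu ltac:(lra) Hmu Hnu).
  - exact (Hlt nu mu ltac:(lra) Hnu Hmu).
Qed.

Lemma sum_n_fterm_ge_pow mu : 0 <= mu <= 1 -> forall n,
  mu ^ S n * sum_n (fterm 1) n <= sum_n (fterm mu) n.
Proof.
  intros hmu n. induction n as [|n IH].
  - rewrite !sum_O, pow1. lra.
  - rewrite !sum_n_Sn_R. cbv beta. rewrite pow1.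
    assert (hs := sum_n_nonneg _ (fterm_nonneg 1 ltac:(lra)) n).
    assert (hp : 0 <= mu ^ S n) by (apply pow_le; lra).
    assert (hpS : mu ^ S (S n) <= mu ^ S n)
      by (change (mu ^ S (S n)) with (mu * mu ^ S n); nra).
    assert (mu ^ S (S n) * sum_n (fterm 1) n <= mu ^ S n * sum_n (fterm 1) n)
      by (apply Rmult_le_compat_r; lra).
    lra.
Qed.

(* Bernoulli's inequality makes [mu ^ (n+1)] close enough to [1] for [mu = 1 - e]. *)
Lemma exists_sum_n_fterm_gt_1 : Rbar_lt 1 (ftilde q Rq 1) ->
  exists mu n, 0 < mu < 1 /\ 1 < sum_n (fterm mu) n.
Proof.
  intros H. destruct (exists_sum_n_gt _ 1 H) as [n Hn].
  set (s := sum_n (fterm 1) n) in *. set (m := INR (S n)).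
  assert (hm : 1 <= m) by (unfold m; rewrite S_INR; assert (0 <= INR n) by apply pos_INR; lra).
  set (e := (s - 1) / (2 * m * s)).
  assert (he : 0 < e <= 1/2).
  { unfold e. split; [apply Rdiv_lt_0_compat; nra|].
    apply Rmult_le_reg_r with (2 * m * s); [nra|].
    unfold Rdiv. rewrite Rmult_assoc, Rinv_l by nra. nra. }
  assert (hme : m * e * s = (s - 1) / 2) by (unfold e; field; nra).
  assert (hb := bernoulli_ineq e (S n) ltac:(lra)). fold m in hb.
  assert (hlow := sum_n_fterm_ge_pow (1 - e) ltac:(lra) n). fold s in hlow.
  exists (1 - e), n. split; [lra | nra].
Qed.

(* [ftilde] inside the unit disc, as a function continuous there. *)
Definition fsum (x : R) : R := x * PSeries (PS_decr_1 (qt q Rq)) x.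

Lemma is_series_fsum mu : Rabs mu < 1 -> is_series (fterm mu) (fsum mu).
Proof.
  intros hmu. replace (fsum mu) with (Series (fterm mu)).
  - exact (Series_correct _ (ex_series_fterm mu hmu)).
  - unfold fsum, PSeries. rewrite <- Series_scal_l. apply Series_ext. intros n.
    unfold PS_decr_1. simpl. ring.
Qed.

Lemma continuity_pt_fsum x : Rabs x < 1 -> continuity_pt fsum x.
Proof.
  intros hx. apply (continuity_pt_mult id).
  - apply derivable_continuous_pt, derivable_pt_id.
  - apply PSeries_continuity. rewrite CV_radius_decr_1, CV_radius_qt. exact hx.
Qed.

Lemma exists_ftilde_root_lt_1 : Rbar_lt 1 (ftilde q Rq 1) ->
  exists mu, 0 < mu < 1 /\ is_series (fterm mu) 1.
Proof.
  intros H. destruct exists_sum_n_fterm_gt_1 as [mu1 [n [hmu1 Hn]]]; [exact H|].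
  assert (hF := is_series_fsum mu1 ltac:(rewrite Rabs_pos_eq; lra)).
  assert (hge := sum_n_le_is_series _ (fterm_nonneg mu1 ltac:(lra)) _ hF n).
  destruct (IVT_interv (fun x => fsum x - 1) 0 mu1) as [mu [hmu Hmu]].
  - intros x hx. apply continuity_pt_minus.
    + apply continuity_pt_fsum. rewrite Rabs_pos_eq; lra.
    + apply continuity_pt_const. intros ? ?. reflexivity.
  - lra.
  - unfold fsum. lra.
  - lra.
  - assert (hmu0 : mu <> 0) by (intros E; rewrite E in Hmu; unfold fsum in Hmu; lra).
    exists mu. split; [lra|].
    replace 1 with (fsum mu) by lra. apply is_series_fsum. rewrite Rabs_pos_eq; lra.
Qed.

Lemma exists_ftilde_root : EQcond q Rq ->
  exists mu G : R, 0 < mu <= 1 /\ is_series (fterm mu) 1 /\ is_series (gterm mu) G.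
Proof.
  intros [H1 | [H1 H2]].
  - destruct (exists_ftilde_root_lt_1 H1) as [mu [hmu Hf]].
    exists mu, (Series (gterm mu)). split; [lra|]. split; [exact Hf|].
    apply Series_correct, ex_series_gterm. rewrite Rabs_pos_eq; lra.
  - destruct (is_series_of_Lim_seq_lt_p_infty _ (gterm_nonneg 1 ltac:(lra)) H2) as [G HG].
    exists 1, G. split; [lra|]. split; [|exact HG].
    exact (is_series_Lim_seq_sum_n _ (fterm_nonneg 1 ltac:(lra)) 1 H1).
Qed.

Lemma is_series_gterm_pos (mu G : R) : 0 < mu -> is_series (gterm mu) G -> 0 < G.
Proof.
  intros hmu HG.
  assert (K := is_series_term_le _ (gterm_nonneg mu ltac:(lra)) G HG 0).
  assert (h := qt_pos 1 ltac:(lia)). simpl in K. nra.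
Qed.

Lemma EQcond_of_ftilde_root (mu G : R) : 0 < mu <= 1 ->
  is_series (fterm mu) 1 -> is_series (gterm mu) G -> EQcond q Rq.
Proof.
  intros [hmu0 [hlt | ->]] Hf Hg.
  - left. assert (hq1 : 0 < qt q Rq 1) by (apply qt_pos; lia).
    eapply Rbar_lt_le_trans; [|exact (ftilde_ge_is_series mu 1 1 ltac:(lra) Hf)].
    simpl. nra.
  - right. split.
    + apply is_lim_seq_unique. exact Hf.
    + unfold gtilde. rewrite (is_lim_seq_unique (sum_n (gterm 1)) G Hg). exact I.
Qed.

End RatioPowerSeries.

Lemma rhoz_eq_0 (z : nat -> R) : (forall n, z (S n) = 0) -> rhoz z = 0.
Proof.
  intros H. unfold rhoz.
  rewrite (Series_ext _ (fun n => 0 * INR (S n))) by (intros n; rewrite H; ring).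
  rewrite Series_scal_l. ring.
Qed.

Section Equilibria.

Variables (q gamma : nat -> R) (Rq : R).
Hypothesis hq_pos : forall l, (1 <= l)%nat -> 0 < q l.
Hypothesis hq1 : q 1%nat = 1.
Hypothesis hR : is_lim_seq (fun l => q (S l) / q (S (S l))) Rq.
Hypothesis hR_pos : 0 < Rq.
Hypothesis hgamma : forall l, (1 <= l)%nat -> 0 < gamma l.

Local Notation fterm mu := (fun n => qt q Rq (S n) * mu ^ S n).
Local Notation gterm mu := (fun n => INR (S n) * qt q Rq (S n) * mu ^ S n).

Definition geom_state (N mu : R) (l : nat) : R := N * qt q Rq l * mu ^ l.

Lemma geom_state_pos N mu l : 0 < N -> 0 < mu -> (1 <= l)%nat -> 0 < geom_state N mu l.
Proof.
  intros hN hmu hl. unfold geom_state.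
  assert (hq := qt_pos q Rq hq_pos hR_pos l hl).
  assert (hp : 0 < mu ^ l) by (apply pow_lt; lra).
  apply Rmult_lt_0_compat; [apply Rmult_lt_0_compat|]; lra.
Qed.

Lemma is_series_geom_state (N mu s : R) : is_series (fterm mu) s ->
  is_series (fun n => geom_state N mu (S n)) (N * s).
Proof.
  intros H.
  assert (E : forall n, qt q Rq (S n) * mu ^ S n * N = geom_state N mu (S n))
    by (intros n; unfold geom_state; ring).
  rewrite Rmult_comm. exact (is_series_ext _ _ _ E (is_series_scal_r N _ s H)).
Qed.

Lemma is_series_rho_geom_state (N mu G : R) : is_series (gterm mu) G ->
  is_series (fun n => INR (S n) * geom_state N mu (S n)) (N * G).
Proof.
  intros H.
  assert (E : forall n,
      INR (S n) * qt q Rq (S n) * mu ^ S n * N = INR (S n) * geom_state N mu (S n))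
    by (intros n; unfold geom_state; ring).
  rewrite Rmult_comm. exact (is_series_ext _ _ _ E (is_series_scal_r N _ G H)).
Qed.

(* Here [q_1 = 1] gives [z_1 = N R mu]. *)
Lemma Jl_geom_state N mu l : Nz (geom_state N mu) = N -> (1 <= l)%nat ->
  Jl q gamma (geom_state N mu) l = 0.
Proof.
  intros HN hl. unfold Jl. rewrite HN. unfold geom_state, qt. rewrite hq1.
  assert (h := hq_pos (S l) ltac:(lia)).
  simpl. field. lra.
Qed.

Lemma geom_state_equilibrium (N mu G : R) : 0 < N -> 0 < mu ->
  is_series (fterm mu) 1 -> is_series (gterm mu) G ->
  equilibrium q gamma (geom_state N mu) /\ rhoz (geom_state N mu) = N * G.
Proof.
  intros hN hmu Hf Hg.
  assert (HN : Nz (geom_state N mu) = N).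
  { unfold Nz. rewrite (is_series_unique _ _ (is_series_geom_state N mu 1 Hf)). ring. }
  assert (Hrho := is_series_rho_geom_state N mu G Hg).
  assert (Hpos : forall n, 0 < geom_state N mu (S n))
    by (intros n; apply geom_state_pos; auto; lia).
  split; [split; [split|split]|].
  - exists (N * G). eapply is_series_ext; [|exact Hrho].
    intros n. cbv beta. rewrite Rabs_pos_eq; [reflexivity | exact (Rlt_le _ _ (Hpos n))].
  - intros l hl. apply Rlt_le, geom_state_pos; auto.
  - unfold J0.
    rewrite (Series_ext _ (fun n => 0 * 0))
      by (intros n; rewrite Jl_geom_state by (auto; lia); ring).
    rewrite Series_scal_l. ring.
  - intros l hl. exact (Jl_geom_state N mu l HN hl).
  - exact (is_series_unique _ _ Hrho).
Qed.

Lemma equilibrium_series z : equilibrium q gamma z ->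
  is_series (fun n => INR (S n) * z (S n)) (rhoz z) /\ is_series (fun n => z (S n)) (Nz z).
Proof.
  intros [[HX Hnn] _].
  assert (Hnn' : forall n, 0 <= z (S n)) by (intros n; apply Hnn; lia).
  assert (Hrho : ex_series (fun n => INR (S n) * z (S n))).
  { eapply ex_series_ext; [|exact HX]. intros n. cbv beta. rewrite Rabs_pos_eq; auto. }
  split; apply Series_correct; [exact Hrho|].
  refine (@ex_series_le R_AbsRing R_CompleteNormedModule _ _ _ Hrho).
  intros n. change (norm (z (S n))) with (Rabs (z (S n))).
  rewrite Rabs_pos_eq, S_INR by auto.
  assert (0 <= INR n) by apply pos_INR. specialize (Hnn' n). nra.
Qed.

Lemma equilibrium_Nz_pos z : equilibrium q gamma z -> 0 < rhoz z -> 0 < Nz z.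
Proof.
  intros Hz Hrho. destruct (Rlt_le_dec 0 (Nz z)) as [h|h]; [exact h|].
  assert (Hnn : forall n, 0 <= z (S n)) by (intros n; apply (proj2 (proj1 Hz)); lia).
  assert (Hle := is_series_term_le _ Hnn _ (proj2 (equilibrium_series z Hz))).
  rewrite rhoz_eq_0 in Hrho; [lra|].
  intros n. specialize (Hle n). specialize (Hnn n). lra.
Qed.

Lemma equilibrium_balance z l : equilibrium q gamma z -> (1 <= l)%nat ->
  z 1%nat * z l = Nz z * (q l / q (S l)) * z (S l).
Proof.
  intros [_ [_ HJ]] hl. specialize (HJ l hl). unfold Jl in HJ.
  apply Rmult_integral in HJ. destruct HJ as [H|H]; [specialize (hgamma l hl)|]; lra.
Qed.

Lemma equilibrium_z1_pos z : equilibrium q gamma z -> 0 < rhoz z -> 0 < z 1%nat.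
Proof.
  intros Hz Hrho.
  assert (HN := equilibrium_Nz_pos z Hz Hrho).
  destruct (Rlt_le_dec 0 (z 1%nat)) as [h|h]; [exact h|].
  assert (H0 : z 1%nat = 0) by (assert (0 <= z 1%nat) by (apply (proj2 (proj1 Hz)); lia); lra).
  rewrite rhoz_eq_0 in Hrho; [lra|].
  intros n. destruct n as [|n]; [exact H0|].
  assert (Hb := equilibrium_balance z (S n) Hz ltac:(lia)). rewrite H0, Rmult_0_l in Hb.
  assert (h1 := hq_pos (S n) ltac:(lia)). assert (h2 := hq_pos (S (S n)) ltac:(lia)).
  assert (hqq : 0 < Nz z * (q (S n) / q (S (S n))))
    by (apply Rmult_lt_0_compat; [|apply Rdiv_lt_0_compat]; lra).
  symmetry in Hb. apply Rmult_integral in Hb. destruct Hb; [lra | assumption].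
Qed.

(* Solving the balance equations recursively from [z_1] forces geometric decay. *)
Lemma equilibrium_geom_state z : equilibrium q gamma z -> 0 < rhoz z ->
  forall l, (1 <= l)%nat -> z l = geom_state (Nz z) (z 1%nat / (Nz z * Rq)) l.
Proof.
  intros Hz Hrho l hl. destruct l as [|n]; [lia|]. clear hl.
  assert (HN := equilibrium_Nz_pos z Hz Hrho).
  induction n as [|n IH].
  - unfold geom_state, qt. rewrite hq1. simpl. field. lra.
  - assert (Hb := equilibrium_balance z (S n) Hz ltac:(lia)).
    assert (h1 := hq_pos (S n) ltac:(lia)). assert (h2 := hq_pos (S (S n)) ltac:(lia)).
    assert (E : z (S (S n)) = z 1%nat * z (S n) * q (S (S n)) / (Nz z * q (S n)))
      by (rewrite Hb; field; lra).
    rewrite E, IH. unfold geom_state, qt. simpl. field. repeat split; lra.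
Qed.

Lemma equilibrium_ftilde_root z : equilibrium q gamma z -> 0 < rhoz z ->
  exists mu, 0 < mu <= 1 /\ (forall l, (1 <= l)%nat -> z l = geom_state (Nz z) mu l)
    /\ is_series (fterm mu) 1 /\ is_series (gterm mu) (rhoz z / Nz z).
Proof.
  intros Hz Hrho.
  assert (HN := equilibrium_Nz_pos z Hz Hrho).
  assert (Hz1 := equilibrium_z1_pos z Hz Hrho).
  destruct (equilibrium_series z Hz) as [Hrs HNs].
  set (mu := z 1%nat / (Nz z * Rq)).
  assert (Hform : forall l, (1 <= l)%nat -> z l = geom_state (Nz z) mu l)
    by exact (equilibrium_geom_state z Hz Hrho).
  assert (Hf : is_series (fterm mu) 1).
  { replace 1 with (Nz z * / Nz z) by (field; lra).
    assert (E : forall n, z (S n) * / Nz z = qt q Rq (S n) * mu ^ S n)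
      by (intros n; rewrite Hform by lia; unfold geom_state; field; lra).
    exact (is_series_ext _ _ _ E (is_series_scal_r _ _ _ HNs)). }
  assert (Hg : is_series (gterm mu) (rhoz z / Nz z)).
  { assert (E : forall n,
        INR (S n) * z (S n) * / Nz z = INR (S n) * qt q Rq (S n) * mu ^ S n)
      by (intros n; rewrite Hform by lia; unfold geom_state; field; lra).
    exact (is_series_ext _ _ _ E (is_series_scal_r _ _ _ Hrs)). }
  exists mu. split; [split|split; [exact Hform | split; [exact Hf | exact Hg]]].
  - apply Rdiv_lt_0_compat; [exact Hz1 | apply Rmult_lt_0_compat; lra].
  - apply Rnot_lt_le. intros Hgt.
    exact (not_ex_series_fterm q Rq hq_pos hR hR_pos mu Hgt (ex_intro _ 1 Hf)).
Qed.

Lemma Atilde_geom_state z mu : 0 < Nz z -> 0 < mu ->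
  (forall l, (1 <= l)%nat -> z l = geom_state (Nz z) mu l) -> Atilde q Rq z = rhoz z * ln mu.
Proof.
  intros hN hmu Hform. unfold Atilde, rhoz.
  rewrite <- Series_scal_r. apply Series_ext. intros n.
  assert (Hpos := geom_state_pos (Nz z) mu (S n) hN hmu ltac:(lia)).
  assert (hq := qt_pos q Rq hq_pos hR_pos (S n) ltac:(lia)).
  unfold Aterm. rewrite Hform by lia.
  destruct (Req_EM_T (geom_state (Nz z) mu (S n)) 0) as [E|_]; [lra|].
  replace (geom_state (Nz z) mu (S n) / (qt q Rq (S n) * Nz z)) with (mu ^ S n)
    by (unfold geom_state; field; lra).
  rewrite ln_pow by exact hmu. unfold geom_state. ring.
Qed.

Lemma exists_equilibrium : EQcond q Rq ->
  forall rho, 0 < rho -> exists z, equilibrium q gamma z /\ rhoz z = rho.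
Proof.
  intros HEQ rho hrho.
  destruct (exists_ftilde_root q Rq hq_pos hR hR_pos HEQ) as [mu [G [hmu [Hf Hg]]]].
  assert (hG := is_series_gterm_pos q Rq hq_pos hR_pos mu G ltac:(lra) Hg).
  destruct (geom_state_equilibrium (rho / G) mu G
              ltac:(apply Rdiv_lt_0_compat; lra) ltac:(lra) Hf Hg) as [Hz Hrho].
  exists (geom_state (rho / G) mu). split; [exact Hz|]. rewrite Hrho. field. lra.
Qed.

Lemma equilibrium_at_ftilde_root z mu : 0 <= mu -> ftilde q Rq mu = Finite 1 ->
  equilibrium q gamma z -> 0 < rhoz z ->
  (forall l, (1 <= l)%nat -> 0 < z l)
  /\ (forall l, (1 <= l)%nat -> z l = geom_state (Nz z) mu l)
  /\ gtilde q Rq mu = Finite (rhoz z / Nz z)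
  /\ Atilde q Rq z = rhoz z * ln mu.
Proof.
  intros hmu Hfmu Hz Hrho.
  assert (HN := equilibrium_Nz_pos z Hz Hrho).
  destruct (equilibrium_ftilde_root z Hz Hrho) as [nu [hnu [Hform [Hf Hg]]]].
  assert (Hnu : nu = mu).
  { apply (ftilde_eq_1_inj q Rq hq_pos hR_pos); [lra | exact hmu | |exact Hfmu].
    apply is_lim_seq_unique. exact Hf. }
  subst nu. split; [|split; [exact Hform | split]].
  - intros l hl. rewrite Hform by exact hl. apply geom_state_pos; auto. lra.
  - apply is_lim_seq_unique. exact Hg.
  - exact (Atilde_geom_state z mu HN ltac:(lra) Hform).
Qed.

End Equilibria.

Theorem theorem7 (q gamma : nat -> R) (Rq : R)
  (hq_pos : forall l, (1 <= l)%nat -> 0 < q l)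
  (hq1 : q 1%nat = 1)
  (hR : is_lim_seq (fun l => q (S l) / q (S (S l))) Rq)
  (hR_pos : 0 < Rq)
  (hgamma : forall l, (1 <= l)%nat -> 0 < gamma l) :
  ((forall rho_s, 0 < rho_s ->
      exists z, equilibrium q gamma z /\ rhoz z = rho_s)
   <-> EQcond q Rq)
  /\
  (EQcond q Rq ->
   exists mu_s,
     (0 < mu_s <= 1 /\ ftilde q Rq mu_s = Finite 1)
     /\ (forall mu, 0 < mu <= 1 -> ftilde q Rq mu = Finite 1 -> mu = mu_s)
     /\ (forall rho_s, 0 < rho_s ->
           forall z, equilibrium q gamma z -> rhoz z = rho_s ->
             (forall l, (1 <= l)%nat -> 0 < z l)
             /\ (forall l, (1 <= l)%nat -> z l = Nz z * qt q Rq l * mu_s ^ l)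
             /\ (exists g, gtilde q Rq mu_s = Finite g /\ Nz z = rho_s / g)
             /\ Atilde q Rq z = rho_s * ln mu_s
             /\ rho_s * ln mu_s <= 0)).
Proof.
  split; [split|].
  - intros Hex. destruct (Hex 1 Rlt_0_1) as [z [Hz Hrho]].
    destruct (equilibrium_ftilde_root q gamma Rq hq_pos hq1 hR hR_pos hgamma z Hz ltac:(lra))
      as [mu [hmu [_ [Hf Hg]]]].
    exact (EQcond_of_ftilde_root q Rq hq_pos hR_pos mu _ hmu Hf Hg).
  - exact (exists_equilibrium q gamma Rq hq_pos hq1 hR hR_pos).
  - intros HEQ.
    destruct (exists_ftilde_root q Rq hq_pos hR hR_pos HEQ) as [mu [G [hmu [Hf _]]]].
    assert (Hfmu : ftilde q Rq mu = Finite 1) by (apply is_lim_seq_unique; exact Hf).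
    exists mu. split; [split; [exact hmu | exact Hfmu]|split].
    { intros nu hnu Hnu. apply (ftilde_eq_1_inj q Rq hq_pos hR_pos); auto; lra. }
    intros rho hrho z Hz <-.
    assert (HN := equilibrium_Nz_pos q gamma z Hz hrho).
    destruct (equilibrium_at_ftilde_root q gamma Rq hq_pos hq1 hR hR_pos hgamma z mu
                ltac:(lra) Hfmu Hz hrho) as [Hpos [Hform [Hg HA]]].
    split; [exact Hpos | split; [exact Hform | split; [|split; [exact HA|]]]].
    + exists (rhoz z / Nz z). split; [exact Hg | field; lra].
    + assert (ln mu <= 0) by (rewrite <- ln_1; apply ln_le; lra). nra.
Qed.
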